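(* Let $m<n$ be positive integers with $n$ even and $(m+n)\mid mn$. Then the Alon-Tarsi number of the complete bipartite graph $K_{m,n}$ equals $\frac{mn}{m+n}+1$.
   Context: For a graph $G$ with vertices ordered $x_1,\dots,x_N$ (treated as variables over a field of characteristic $0$), the graph polynomial is $P_G=\prod_{i<j,\ x_ix_j\in E(G)}(x_i-x_j)$. The Alon-Tarsi number of $G$ is $1+\min\max_k i_k$, where the minimum is over all monomials $x_1^{i_1}\cdots x_N^{i_N}$ with nonzero coefficient in $P_G$. *)

From HB Require Import structures.
From mathcomp Require Import all_boot all_order all_algebra.
From mathcomp Require Import mpoly.
Set Implicit Arguments. Unset Strict Implicit. Unset Printing Implicit Defensive.
Import GRing.Theory.
Local Open Scope ring_scope.

Definition graph_poly (R : comNzRingType) (N : nat) (e : rel 'I_N) : {mpoly R[N]} :=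
  \prod_(i < N) \prod_(j < N | (i < j)%N && e i j) ('X_i - 'X_j).

Definition maxdeg (N : nat) (m : 'X_{1..N}) : nat := (\max_(k < N) m k)%N.

Definition is_AT_number (N : nat) (e : rel 'I_N) (k : nat) : Prop :=
  (exists m : 'X_{1..N}, (graph_poly rat e)@_m != 0 /\ k = (1 + maxdeg m)%N) /\
  (forall m : 'X_{1..N}, (graph_poly rat e)@_m != 0 -> (k <= 1 + maxdeg m)%N).

(* Complete bipartite graph K_{m,n} on 'I_(m+n): parts {0..m-1} and {m..m+n-1}. *)
Definition Kbip (m n : nat) : rel 'I_(m + n) :=
  fun i j => (i < m)%N != (j < m)%N.

From HB Require Import structures.
From mathcomp Require Import all_boot all_order all_algebra.
From mathcomp Require Import mpoly zify.
Set Implicit Arguments. Unset Strict Implicit. Unset Printing Implicit Defensive.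
Import GRing.Theory.
Local Open Scope ring_scope.

(* Expanding the graph polynomial of K_{m,n} factor by factor, each term is the
   out-degree monomial of an orientation of K_{m,n}, with sign (-1)^r where r is
   the number of edges directed from the right part to the left part.  As r is
   the total out-degree of the right part, all orientations with a given
   out-degree vector contribute with the same sign, so the support of P_G is
   exactly the set of out-degree vectors.  Such a vector has total degree mn,
   hence some exponent is at least mn/(m+n).  Conversely, with g = gcd(m,n) and
   p = mg/(m+n), directing the edge (i,j) from left to right iff
   (i + j) mod g < p gives every vertex out-degree mn/(m+n). *)

Section PeriodicSums.
Local Open Scope nat_scope.
Variables (F : nat -> nat) (q : nat).
Hypothesis F_periodic : forall x, F (x + q) = F x.

Lemma sum_periodic_window s : \sum_(s <= j < s + q) F j = \sum_(j < q) F j.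
Proof.
elim: s => [|s IH]; first by rewrite add0n big_mkord.
apply/eqP; rewrite -IH -(eqn_add2r (F (s + q))).
rewrite -[in X in _ == X]big_nat_recr ?leq_addr // -addSn.
by rewrite F_periodic addnC -big_ltn // ltnS leq_addr.
Qed.

Lemma sum_periodic s t : \sum_(s <= j < s + t * q) F j = t * \sum_(j < q) F j.
Proof.
elim: t => [|t IH]; first by rewrite mul0n addn0 big_geq.
rewrite (@big_cat_nat _ _ _ (s + t * q)) ?leq_addr ?leq_add2l ?leq_mul //= IH.
by rewrite mulSnr addnA sum_periodic_window mulSnr.
Qed.
End PeriodicSums.

Lemma sum_ord_lt p q : (p <= q)%N -> (\sum_(j < q) (j < p) = p)%N.
Proof.
move=> le_pq; rewrite -big_mkcond /= -(big_ord_widen _ (fun=> 1%N)) //.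
by rewrite sum1_card card_ord.
Qed.

Lemma sum_mod_lt q p s n : (p <= q)%N -> (q %| n)%N ->
  (\sum_(j < n) ((s + j) %% q < p) = n %/ q * p)%N.
Proof.
move=> le_pq q_dvd_n.
set F := fun j => (j %% q < p : nat).
have -> : (\sum_(j < n) F (s + j) = \sum_(s <= j < s + n) F j)%N.
  rewrite -{2}[s]add0n big_addn addKn big_mkord.
  by apply: eq_bigr => j _; rewrite addnC.
rewrite -{1}(divnK q_dvd_n) sum_periodic; last by move=> x; rewrite /F modnDr.
rewrite (eq_bigr (fun j : 'I_q => (j < p : nat))) ?sum_ord_lt // => j _.
by rewrite /F modn_small.
Qed.

Lemma sum_negb (T : finType) (b : pred T) : (\sum_x ~~ b x = #|T| - \sum_x b x)%N.
Proof.
have <- : (\sum_x ~~ b x + \sum_x b x = #|T|)%N.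
  by rewrite -big_split -sum1_card; apply: eq_bigr => x _; case: (b x).
by rewrite addnK.
Qed.

Lemma dvdn_mul_gcdn m n : (m + n %| m * n)%N -> (m + n %| m * gcdn m n)%N.
Proof.
move=> dvd_mn; rewrite muln_gcdr dvdn_gcd dvd_mn andbT.
have -> : (m * m = m * (m + n) - m * n)%N by rewrite mulnDr addnK.
by apply: dvdn_sub => //; apply: dvdn_mull.
Qed.

Section OrientationExpansion.
Variables (N : nat) (E : finType) (tail head : E -> 'I_N).

(* [f e] selects the term [X_(tail e)] or [- X_(head e)] of the factor of [e];
   read as an orientation, [source f e] is the vertex the edge leaves. *)
Definition source (f : {ffun E -> bool}) e := if f e then tail e else head e.

Definition outdeg_mnm (f : {ffun E -> bool}) : 'X_{1..N} :=
  (\sum_e U_(source f e))%MM.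

Definition nreversed (f : {ffun E -> bool}) := (\sum_e ~~ f e)%N.

Lemma outdeg_mnmE f v : outdeg_mnm f v = (\sum_e (source f e == v))%N.
Proof. by rewrite mnm_sumE; apply: eq_bigr => e _; rewrite mnm1E. Qed.

Lemma mdeg_outdeg_mnm f : mdeg (outdeg_mnm f) = #|E|.
Proof. by rewrite mdeg_sum -sum1_card; apply: eq_bigr => e _; exact: mdeg1. Qed.

Lemma prod_diffX_expand (R : comNzRingType) :
  \prod_e ('X_(tail e) - 'X_(head e)) =
  \sum_(f : {ffun E -> bool}) (-1) ^+ nreversed f *: 'X_[outdeg_mnm f]
    :> {mpoly R[N]}.
Proof.
transitivity (\prod_e \sum_(b : bool) (if b then 'X_(tail e) else - 'X_(head e))
  : {mpoly R[N]}); first by apply: eq_bigr => e _; rewrite big_bool.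
rewrite bigA_distr_bigA; apply: eq_bigr => f _.
rewrite -mprodXE -prodrXr -scaler_prod; apply: eq_bigr => e _.
by rewrite /source; case: (f e); rewrite ?scale1r ?scaleN1r.
Qed.

Lemma mcoeff_prod_diffX (R : comNzRingType) u :
  (\prod_e ('X_(tail e) - 'X_(head e)) : {mpoly R[N]})@_u =
  \sum_(f | outdeg_mnm f == u) (-1) ^+ nreversed f.
Proof.
rewrite prod_diffX_expand raddf_sum [RHS]big_mkcond /=; apply: eq_bigr => f _.
by rewrite mcoeffZ mcoeffX; case: eqP; rewrite ?mulr1 ?mulr0.
Qed.

Section Bipartite.
Variable (L : pred 'I_N).
Hypotheses (tail_in : forall e, L (tail e)) (head_out : forall e, ~~ L (head e)).

Lemma nreversed_bipartite f :
  nreversed f = (\sum_(v | ~~ L v) outdeg_mnm f v)%N.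
Proof.
under eq_bigr do rewrite outdeg_mnmE.
rewrite exchange_big; apply: eq_bigr => e _; rewrite /source.
case: (f e) => /=.
  by rewrite big1 // => v; case: eqP => // <-; rewrite tail_in.
rewrite (bigD1 (head e)) ?head_out //= eqxx big1 // => v /andP [_].
by rewrite eq_sym => /negbTE ->.
Qed.

Lemma mcoeff_prod_diffX_bipartite (R : comNzRingType) u :
  (\prod_e ('X_(tail e) - 'X_(head e)) : {mpoly R[N]})@_u =
  (-1) ^+ (\sum_(v | ~~ L v) u v) *+ #|[pred f | outdeg_mnm f == u]|.
Proof.
rewrite mcoeff_prod_diffX -mulr_natr -sum1_card natr_sum mulr_sumr.
by apply: eq_bigr => f /eqP <-; rewrite nreversed_bipartite mulr1.
Qed.

Lemma mcoeff_prod_diffX_bipartite_neq0P (R : numDomainType) u :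
  reflect (exists f, outdeg_mnm f = u)
    ((\prod_e ('X_(tail e) - 'X_(head e)) : {mpoly R[N]})@_u != 0).
Proof.
rewrite mcoeff_prod_diffX_bipartite Num.Theory.mulrn_eq0 signr_eq0 orbF -lt0n.
apply: (iffP card_gt0P) => -[f].
  by exists f; apply/eqP.
by exists f; rewrite inE; apply/eqP.
Qed.
End Bipartite.
End OrientationExpansion.

Definition Kbip_left m n (e : 'I_m * 'I_n) : 'I_(m + n) := lshift n e.1.
Definition Kbip_right m n (e : 'I_m * 'I_n) : 'I_(m + n) := rshift m e.2.

Lemma graph_poly_Kbip (R : comNzRingType) m n :
  graph_poly R (@Kbip m n) =
  \prod_(e : 'I_m * 'I_n) ('X_(Kbip_left e) - 'X_(Kbip_right e)).
Proof.
rewrite /graph_poly big_split_ord /= [X in _ * X]big1 ?mulr1; last first.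
  move=> i _; apply: big_pred0 => j; rewrite /Kbip /=.
  have -> : (m + i < m)%N = false by lia.
  by case: ltnP => lt_jm /=; rewrite ?andbF ?andbT //; lia.
rewrite /Kbip_left /Kbip_right.
rewrite -(pair_bigA _ (fun i j => 'X_(lshift n i) - 'X_(rshift m j))).
apply: eq_bigr => i _; rewrite big_split_ord /= big_pred0 ?mul1r; last first.
  by move=> j; rewrite /Kbip /= !ltn_ord andbF.
apply: eq_bigl => j; rewrite /Kbip /= ltn_ord.
have -> : (m + j < m)%N = false by lia.
by rewrite ltn_addr.
Qed.

Section KbipOrientation.
Variables m n : nat.
Implicit Type f : {ffun 'I_m * 'I_n -> bool}.
Local Notation outdeg f := (outdeg_mnm (@Kbip_left m n) (@Kbip_right m n) f).

Lemma sum_pair_ord (G : 'I_m * 'I_n -> nat) :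
  (\sum_e G e = \sum_(i < m) \sum_(j < n) G (i, j))%N.
Proof. by rewrite pair_bigA; apply: eq_bigr => -[]. Qed.

Lemma outdeg_Kbip_left f i : outdeg f (lshift n i) = (\sum_(j < n) f (i, j))%N.
Proof.
rewrite outdeg_mnmE sum_pair_ord /source /Kbip_left /Kbip_right /=.
rewrite (bigD1 i) //= [X in (_ + X)%N]big1 ?addn0 => [|i' ne_i'i].
  by apply: eq_bigr => j _; case: (f _); rewrite ?eqxx ?eq_rlshift.
apply: big1 => j _.
by case: (f _); rewrite ?eq_lshift ?eq_rlshift ?(negbTE ne_i'i).
Qed.

Lemma outdeg_Kbip_right f j :
  outdeg f (rshift m j) = (\sum_(i < m) ~~ f (i, j))%N.
Proof.
rewrite outdeg_mnmE sum_pair_ord /source /Kbip_left /Kbip_right /=.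
apply: eq_bigr => i _; rewrite (bigD1 j) //= big1 ?addn0 => [|j' ne_j'j].
  by case: (f _); rewrite ?eq_lrshift ?eqxx.
by case: (f _); rewrite ?eq_lrshift ?eq_rshift ?(negbTE ne_j'j).
Qed.

Lemma mcoeff_Kbip_neq0P (R : numDomainType) u :
  reflect (exists f, outdeg f = u) ((graph_poly R (@Kbip m n))@_u != 0).
Proof.
rewrite graph_poly_Kbip.
apply: (mcoeff_prod_diffX_bipartite_neq0P (L := fun v : 'I_(m + n) => (v < m)%N)).
  by move=> e; rewrite /Kbip_left /= ltn_ord.
by move=> e; rewrite /Kbip_right /= -leqNgt leq_addr.
Qed.

Definition mod_orientation g p : {ffun 'I_m * 'I_n -> bool} :=
  [ffun e : 'I_m * 'I_n => (e.1 + e.2) %% g < p]%N.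

Lemma outdeg_mod_orientation_left g p i : (p <= g)%N -> (g %| n)%N ->
  outdeg (mod_orientation g p) (lshift n i) = (n %/ g * p)%N.
Proof.
move=> le_pg dvd_gn; rewrite outdeg_Kbip_left -(sum_mod_lt i) //.
by apply: eq_bigr => j _; rewrite ffunE.
Qed.

Lemma outdeg_mod_orientation_right g p j : (p <= g)%N -> (g %| m)%N ->
  outdeg (mod_orientation g p) (rshift m j) = (m - m %/ g * p)%N.
Proof.
move=> le_pg dvd_gm; rewrite outdeg_Kbip_right sum_negb card_ord.
rewrite -(sum_mod_lt j) //; congr (_ - _)%N.
by apply: eq_bigr => i _; rewrite ffunE addnC.
Qed.

Lemma Kbip_balanced_orientation : (0 < m)%N -> (m + n %| m * n)%N ->
  exists f, outdeg f = [multinom m * n %/ (m + n) | _ < m + n]%N.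
Proof.
move=> m_gt0 dvd_mn.
set k := (m * n %/ (m + n))%N; set g := gcdn m n; set p := (m * g %/ (m + n))%N.
have mn_gt0 : (0 < m + n)%N by rewrite addn_gt0 m_gt0.
have g_gt0 : (0 < g)%N by rewrite gcdn_gt0 m_gt0.
have kE : (k * (m + n) = m * n)%N by rewrite divnK.
have pE : (p * (m + n) = m * g)%N by rewrite divnK ?dvdn_mul_gcdn.
have mE := divnK (dvdn_gcdl m n); have nE := divnK (dvdn_gcdr m n).
have le_pg : (p <= g)%N.
  by rewrite -(leq_pmul2r mn_gt0) pE mulnC leq_pmul2l ?leq_addr.
have outdeg_left : (n %/ g * p = k)%N.
  apply/eqP; rewrite -(eqn_pmul2r mn_gt0) kE -mulnA pE -[X in _ == m * X]nE.
  by rewrite mulnCA.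
have outdeg_right : (m - m %/ g * p = k)%N.
  apply/eqP; rewrite -(eqn_pmul2r mn_gt0) mulnBl kE -mulnA pE mulnCA mE.
  by rewrite mulnDr addKn.
exists (mod_orientation g p); apply/mnmP => v; rewrite mnmE.
rewrite -(splitK v); case: (split v) => [i|j] /=.
  by rewrite outdeg_mod_orientation_left ?dvdn_gcdr.
by rewrite outdeg_mod_orientation_right ?dvdn_gcdl.
Qed.
End KbipOrientation.

Lemma maxdeg_const N k : (0 < N)%N -> maxdeg [multinom k | _ < N] = k.
Proof.
case: N => // N _; apply/eqP; rewrite eqn_leq; apply/andP; split.
  by apply/bigmax_leqP => i _; rewrite mnmE.
by have := @leq_bigmax _ (fun i => [multinom k | _ < N.+1] i) ord0; rewrite mnmE.
Qed.

Lemma mdeg_le_maxdeg N (u : 'X_{1..N}) : (mdeg u <= N * maxdeg u)%N.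
Proof.
rewrite mdegE (@leq_trans (\sum_(i < N) maxdeg u)) ?leq_sum // => [i _|].
  exact: (@leq_bigmax _ (fun i => u i)).
by rewrite sum_nat_const card_ord.
Qed.

Theorem mainTheorem4 (m n : nat) :
  (0 < m)%N -> (m < n)%N -> ~~ odd n -> ((m + n) %| m * n)%N ->
  is_AT_number (@Kbip m n) ((m * n) %/ (m + n) + 1)%N.
Proof.
move=> m_gt0 _ _ dvd_mn; set k := (m * n %/ (m + n))%N.
have mn_gt0 : (0 < m + n)%N by rewrite addn_gt0 m_gt0.
split.
  have [f f_balanced] := Kbip_balanced_orientation m_gt0 dvd_mn.
  exists [multinom k | _ < m + n]; split; last by rewrite maxdeg_const // addnC.
  by apply/mcoeff_Kbip_neq0P; exists f.
move=> u /mcoeff_Kbip_neq0P [f <-]; rewrite addnC leq_add2l.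
have := mdeg_le_maxdeg (outdeg_mnm (@Kbip_left m n) (@Kbip_right m n) f).
by rewrite mdeg_outdeg_mnm card_prod !card_ord -(divnK dvd_mn) mulnC leq_pmul2l.
Qed.
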